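(* Consider a two-bus network consisting of a single line with admittance $g-jb$ ($g,b\ge 0$) joining bus 1 and bus 2, where the voltage magnitudes $|V_1|,|V_2|>0$ are fixed. Let $\underline{\theta}\in[-\pi,0]$ and $\overline{\theta}\in[0,\pi]$, and let $\mathcal{P}\subset\mathbb{R}^2$ be the set of all points $(P_1,P_2)$ with $$P_1=|V_1|^2 g+|V_1||V_2| b\sin\theta-|V_1||V_2| g\cos\theta,\qquad P_2=|V_2|^2 g-|V_1||V_2| b\sin\theta-|V_1||V_2| g\cos\theta$$ obtained as $\theta$ ranges over $[\underline{\theta},\overline{\theta}]$. Then $\mathcal{O}(\mathcal{P})=\mathcal{O}(\mathrm{conv}(\mathcal{P}))$.
   Context: For a set $\mathcal{A}\subseteq\mathbb{R}^m$, a point $x\in\mathcal{A}$ is Pareto-optimal if there is no $y\in\mathcal{A}$ with $y\le x$ componentwise and strict inequality in at least one coordinate; $\mathcal{O}(\mathcal{A})$ denotes the set of Pareto-optimal points of $\mathcal{A}$. $\mathrm{conv}(\cdot)$ denotes the convex hull. Here $\theta=\theta_1-\theta_2$ is the difference of the voltage phase angles at the two buses, and $P_i$ is the real power injected at bus $i$. *)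

From Stdlib Require Import Reals List.
Open Scope R_scope.

Definition pt := (R * R)%type.

Definition dominates (y x : pt) : Prop :=
  fst y <= fst x /\ snd y <= snd x /\ (fst y < fst x \/ snd y < snd x).

Definition pareto (A : pt -> Prop) (x : pt) : Prop :=
  A x /\ ~ (exists y, A y /\ dominates y x).

Definition wsum (l : list (R * pt)) : pt :=
  (fold_right (fun wp s => fst wp * fst (snd wp) + s) 0 l,
   fold_right (fun wp s => fst wp * snd (snd wp) + s) 0 l).

Definition conv (A : pt -> Prop) (x : pt) : Prop :=
  exists l : list (R * pt),
    Forall (fun wp => 0 <= fst wp /\ A (snd wp)) l /\
    fold_right (fun wp s => fst wp + s) 0 l = 1 /\
    x = wsum l.

Definition two_bus_P (g b V1 V2 thl thu : R) (p : pt) : Prop :=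
  exists th, thl <= th <= thu /\
    fst p = V1 ^ 2 * g + V1 * V2 * b * sin th - V1 * V2 * g * cos th /\
    snd p = V2 ^ 2 * g - V1 * V2 * b * sin th - V1 * V2 * g * cos th.

(* Every point y of conv P is weakly dominated by a point of P; since P is
   contained in conv P, this forces the two Pareto fronts to coincide.
   Along the curve, P1 - P2 = (V1^2 - V2^2) g + 2 V1 V2 b sin θ.  If y1 - y2
   is at least its value at the minimiser of P2 (or at most its value at the
   minimiser of P1), that minimiser dominates y.  Otherwise some θ with
   cos θ > 0 has P1 θ - P2 θ = y1 - y2; the linear form with normal
   (b cos θ - g sin θ, b cos θ + g sin θ) equals a constant minus
   2 V1 V2 b g cos (s - θ) at the curve point of parameter s, so it supports P
   at θ, hence also conv P, and as the normal has positive coordinate sum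
   2 b cos θ, y lies above P(θ) along the diagonal. *)
From Stdlib Require Import Reals Lra Psatz List.
Open Scope R_scope.

Lemma conv_of_mem (A : pt -> Prop) x : A x -> conv A x.
Proof.
  intros Hx. exists ((1, x) :: nil). split; [|split].
  - constructor; [split; [simpl; lra | exact Hx] | constructor].
  - simpl; ring.
  - destruct x as [x1 x2]; unfold wsum; simpl; f_equal; ring.
Qed.

Lemma wsum_halfplane (A : pt -> Prop) (al be ga : R) l :
  (forall z, A z -> ga <= al * fst z + be * snd z) ->
  Forall (fun wp => 0 <= fst wp /\ A (snd wp)) l ->
  ga * fold_right (fun wp s => fst wp + s) 0 l <= al * fst (wsum l) + be * snd (wsum l).
Proof.
  intros HA. induction l as [|[w p] l IH]; intros Hl; unfold wsum in *; simpl in *.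
  - lra.
  - inversion Hl as [|? ? [Hw Hp] Hl']; subst.
    simpl in Hw, Hp. specialize (IH Hl'). specialize (HA p Hp).
    assert (w * ga <= w * (al * fst p + be * snd p)) by (apply Rmult_le_compat_l; lra).
    nra.
Qed.

Lemma conv_halfplane (A : pt -> Prop) (al be ga : R) :
  (forall z, A z -> ga <= al * fst z + be * snd z) ->
  forall x, conv A x -> ga <= al * fst x + be * snd x.
Proof.
  intros HA x [l [Hl [H1 ->]]].
  pose proof (wsum_halfplane A al be ga l HA Hl) as H. rewrite H1 in H. lra.
Qed.

Lemma pareto_eq_of_weakly_dominated (A B : pt -> Prop) :
  (forall x, A x -> B x) ->
  (forall y, B y -> exists z, A z /\ fst z <= fst y /\ snd z <= snd y) ->
  forall x, pareto A x <-> pareto B x.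
Proof.
  intros AB Bdom x. unfold pareto, dominates. split.
  - intros [Hx Hmin]. split; [now apply AB|].
    intros [y [Hy Hyx]]. destruct (Bdom y Hy) as [z [Hz Hzy]].
    apply Hmin. exists z. split; [exact Hz | lra].
  - intros [Hx Hmin]. destruct (Bdom x Hx) as [[z1 z2] [Hz [Hz1 Hz2]]]; simpl in *.
    destruct (Rle_lt_or_eq_dec _ _ Hz1) as [Hlt1 | E1];
      [| destruct (Rle_lt_or_eq_dec _ _ Hz2) as [Hlt2 | E2]];
      try (exfalso; apply Hmin; exists (z1, z2); simpl; split; [now apply AB | lra]).
    destruct x as [x1 x2]; simpl in *; subst.
    split; [exact Hz|].
    intros [y [Hy Hyx]]. apply Hmin. exists y. split; [now apply AB | exact Hyx].
Qed.

Lemma sin_le_sin_right_end t u : - PI <= t -> t <= u -> 0 <= u <= PI / 2 ->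
  sin t <= sin u.
Proof.
  intros Ht Htu Hu. destruct (Rle_dec (- (PI / 2)) t).
  - apply sin_incr_1; lra.
  - assert (0 <= sin (- t)) by (apply sin_ge_0; lra).
    assert (0 <= sin u) by (apply sin_ge_0; lra).
    rewrite sin_neg in *. lra.
Qed.

Lemma sin_le_sin_left_end l t : - (PI / 2) <= l <= 0 -> l <= t -> t <= PI ->
  sin l <= sin t.
Proof.
  intros Hl Hlt Ht.
  pose proof (sin_le_sin_right_end (- t) (- l)) as H. rewrite !sin_neg in H.
  assert (- sin t <= - sin l) by (apply H; lra). lra.
Qed.

Lemma sin_attained_with_cos_pos thl thu t1 t2 w :
  - PI <= thl <= 0 -> 0 <= thu <= PI ->
  thl <= t1 <= thu -> thl <= t2 <= thu -> sin t1 < w < sin t2 ->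
  exists t, thl <= t <= thu /\ sin t = w /\ 0 < cos t.
Proof.
  intros Hthl Hthu Ht1 Ht2 Hw.
  pose proof (SIN_bound t1). pose proof (SIN_bound t2).
  assert (Hsin : sin (asin w) = w) by (apply sin_asin; lra).
  assert (Hrange : - (PI / 2) < asin w < PI / 2) by (apply asin_bound_lt; lra).
  exists (asin w). repeat split; [| | exact Hsin | apply cos_gt_0; lra].
  - destruct (Rle_dec thl (asin w)) as [|Hlt]; [assumption | exfalso].
    assert (sin thl <= sin t1) by (apply sin_le_sin_left_end; lra).
    assert (sin (asin w) <= sin thl) by (apply sin_incr_1; lra). lra.
  - destruct (Rle_dec (asin w) thu) as [|Hlt]; [assumption | exfalso].
    assert (sin t2 <= sin thu) by (apply sin_le_sin_right_end; lra).
    assert (sin thu <= sin (asin w)) by (apply sin_incr_1; lra). lra.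
Qed.

Section TwoBus.

Variables g b V1 V2 thl thu : R.
Hypotheses (hg : 0 <= g) (hb : 0 <= b) (hV1 : 0 < V1) (hV2 : 0 < V2)
  (hthl : - PI <= thl <= 0) (hthu : 0 <= thu <= PI).

Definition P1 t := V1 ^ 2 * g + V1 * V2 * b * sin t - V1 * V2 * g * cos t.
Definition P2 t := V2 ^ 2 * g - V1 * V2 * b * sin t - V1 * V2 * g * cos t.

Let P := two_bus_P g b V1 V2 thl thu.

Lemma two_bus_P_param z : P z <-> exists t, thl <= t <= thu /\ z = (P1 t, P2 t).
Proof.
  split.
  - intros [t [Ht [E1 E2]]]. exists t. split; [exact Ht|].
    destruct z; simpl in *; subst; reflexivity.
  - intros [t [Ht ->]]. exists t. now repeat split.
Qed.

Lemma P1_sub_P2 t : P1 t - P2 t = (V1 ^ 2 - V2 ^ 2) * g + 2 * (V1 * V2) * b * sin t.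
Proof. unfold P1, P2; ring. Qed.

Lemma P_supporting_line s t :
  (b * cos t - g * sin t) * P1 t + (b * cos t + g * sin t) * P2 t
  <= (b * cos t - g * sin t) * P1 s + (b * cos t + g * sin t) * P2 s.
Proof.
  assert (E : forall s, (b * cos t - g * sin t) * P1 s + (b * cos t + g * sin t) * P2 s
    = (b * cos t - g * sin t) * V1 ^ 2 * g + (b * cos t + g * sin t) * V2 ^ 2 * g
      - 2 * (V1 * V2) * b * g * cos (s - t)).
  { intros s'. rewrite cos_minus. unfold P1, P2. ring. }
  rewrite !E, Rminus_diag, cos_0.
  assert (0 <= 2 * (V1 * V2) * b * g) by (repeat apply Rmult_le_pos; lra).
  pose proof (COS_bound (s - t)). nra.
Qed.

Lemma conv_P_above_diagonal t y :
  0 < b -> 0 < cos t -> conv P y -> fst y - snd y = P1 t - P2 t ->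
  P1 t <= fst y /\ P2 t <= snd y.
Proof.
  intros Hb Hcos Hy Hdiff.
  assert (Hsupp := conv_halfplane P (b * cos t - g * sin t) (b * cos t + g * sin t)
    ((b * cos t - g * sin t) * P1 t + (b * cos t + g * sin t) * P2 t)).
  assert (H : (b * cos t - g * sin t) * P1 t + (b * cos t + g * sin t) * P2 t
    <= (b * cos t - g * sin t) * fst y + (b * cos t + g * sin t) * snd y).
  { apply Hsupp; [|exact Hy].
    intros z Hz. destruct (proj1 (two_bus_P_param z) Hz) as [s [_ ->]].
    apply P_supporting_line. }
  assert (0 < 2 * b * cos t) by nra.
  assert (0 <= 2 * b * cos t * (fst y - P1 t)) by nra.
  assert (0 <= fst y - P1 t) by nra.
  lra.
Qed.

Lemma conv_P_weakly_dominated y : conv P y ->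
  exists z, P z /\ fst z <= fst y /\ snd z <= snd y.
Proof.
  intros Hy.
  assert (Hle : thl <= thu) by lra.
  destruct (continuity_ab_min P1 thl thu Hle) as [t1 [Hmin1 Ht1]].
  { intros c _. unfold P1. reg. }
  destruct (continuity_ab_min P2 thl thu Hle) as [t2 [Hmin2 Ht2]].
  { intros c _. unfold P2. reg. }
  assert (Hy1 : P1 t1 <= fst y).
  { enough (P1 t1 <= 1 * fst y + 0 * snd y) by lra.
    apply (conv_halfplane P); [|exact Hy].
    intros z Hz. destruct (proj1 (two_bus_P_param z) Hz) as [s [Hs ->]]. simpl.
    specialize (Hmin1 s Hs). lra. }
  assert (Hy2 : P2 t2 <= snd y).
  { enough (P2 t2 <= 0 * fst y + 1 * snd y) by lra.
    apply (conv_halfplane P); [|exact Hy].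
    intros z Hz. destruct (proj1 (two_bus_P_param z) Hz) as [s [Hs ->]]. simpl.
    specialize (Hmin2 s Hs). lra. }
  destruct (Rle_dec (P1 t2 - P2 t2) (fst y - snd y)) as [C2 | C2].
  { exists (P1 t2, P2 t2). split; [apply two_bus_P_param; now exists t2 | simpl; lra]. }
  destruct (Rle_dec (fst y - snd y) (P1 t1 - P2 t1)) as [C1 | C1].
  { exists (P1 t1, P2 t1). split; [apply two_bus_P_param; now exists t1 | simpl; lra]. }
  rewrite !P1_sub_P2 in C1, C2.
  assert (Hb : 0 < b).
  { destruct hb as [| <-]; [assumption | lra]. }
  assert (HK : 0 < 2 * (V1 * V2) * b) by (apply Rmult_lt_0_compat; nra).
  set (w := (fst y - snd y - (V1 ^ 2 - V2 ^ 2) * g) / (2 * (V1 * V2) * b)).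
  assert (Hw : sin t1 < w < sin t2).
  { unfold w. split.
    - apply Rmult_lt_reg_r with (2 * (V1 * V2) * b); [assumption|].
      field_simplify; nra.
    - apply Rmult_lt_reg_r with (2 * (V1 * V2) * b); [assumption|].
      field_simplify; nra. }
  destruct (sin_attained_with_cos_pos thl thu t1 t2 w hthl hthu Ht1 Ht2 Hw)
    as [t [Ht [Hsin Hcos]]].
  assert (Hdiff : fst y - snd y = P1 t - P2 t).
  { rewrite P1_sub_P2, Hsin. unfold w. field. lra. }
  exists (P1 t, P2 t). split; [apply two_bus_P_param; now exists t|].
  now apply conv_P_above_diagonal.
Qed.

End TwoBus.

Theorem lemma1 (g b V1 V2 thl thu : R)
  (hg : 0 <= g) (hb : 0 <= b) (hV1 : 0 < V1) (hV2 : 0 < V2)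
  (hthl : - PI <= thl <= 0) (hthu : 0 <= thu <= PI) :
  forall x : pt,
    pareto (two_bus_P g b V1 V2 thl thu) x <->
    pareto (conv (two_bus_P g b V1 V2 thl thu)) x.
Proof.
  apply pareto_eq_of_weakly_dominated.
  - apply conv_of_mem.
  - exact (conv_P_weakly_dominated g b V1 V2 thl thu hg hb hV1 hV2 hthl hthu).
Qed.
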